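(* For any integer $t\geq 2$, there exist a connected graph $G$ and a function $g:V(G_1)\to V(G_2)$ such that $Dist(G)=t=Dist(F_G)$.
   Context: $Dist(H)$ is the least $t$ such that $H$ has a labeling $V(H)\to\{1,\dots,t\}$ preserved by no non-identity automorphism of $H$. Functigraph: for disjoint copies $G_1,G_2$ of a connected graph $G$ and a function $g:V(G_1)\to V(G_2)$, $F_G$ has vertex set $V(G_1)\cup V(G_2)$ and edge set $E(G_1)\cup E(G_2)\cup\{uv: u\in V(G_1),\ g(u)=v\}$. *)

From mathcomp Require Import all_boot all_fingroup.
Set Implicit Arguments. Unset Strict Implicit. Unset Printing Implicit Defensive.

Definition simple_graph (V : finType) (e : rel V) : Prop :=
  symmetric e /\ irreflexive e.

Definition connected_graph (V : finType) (e : rel V) : Prop :=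
  0 < #|V| /\ forall x y : V, connect e x y.

Definition is_automorphism (V : finType) (e : rel V) (f : {perm V}) : Prop :=
  forall x y : V, e (f x) (f y) = e x y.

(* A labeling with t labels (labels 'I_t, i.e. t values, standing for {1..t})
   is distinguishing if no non-identity automorphism preserves it. *)
Definition distinguishing (V : finType) (e : rel V) (t : nat) (c : V -> 'I_t) : Prop :=
  forall f : {perm V}, is_automorphism e f -> (forall x, c (f x) = c x) -> f = 1%g.

Definition has_dist_labeling (V : finType) (e : rel V) (t : nat) : Prop :=
  exists c : V -> 'I_t, distinguishing e c.

Definition Dist_eq (V : finType) (e : rel V) (t : nat) : Prop :=
  has_dist_labeling e t /\ forall s, has_dist_labeling e s -> t <= s.

(* Functigraph F_G: vertices V(G_1) + V(G_2) (inl = G_1, inr = G_2), edges of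
   both copies plus u v for u in G_1 with g u = v. *)
Definition functigraph (V : finType) (e : rel V) (g : V -> V) : rel (V + V) :=
  fun a b => match a, b with
  | inl x, inl y => e x y
  | inr x, inr y => e x y
  | inl x, inr y => g x == y
  | inr y, inl x => g x == y
  end.

From mathcomp Require Import all_boot all_fingroup zify.
Set Implicit Arguments. Unset Strict Implicit. Unset Printing Implicit Defensive.

(* Take G = K_t and let g send all of G_1 to one vertex v0 of G_2.  Any two
   vertices of K_t, and any two vertices of G_1 in F_G, are twins (they have the
   same neighbours), so swapping them is an automorphism and a distinguishing
   labeling must separate them: both Dist values are at least t.  Conversely,
   labeling both copies of each vertex i by i distinguishes F_G, because the two
   copies of i have different degrees (t in G_1; t-1, or 2t-1 for i = v0, in G_2)
   and automorphisms preserve degrees. *)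

Section Labelings.
Variables (V : finType) (e : rel V).

Definition degree (x : V) : nat := #|e x|.

Definition twins (x y : V) : Prop := forall z, z != x -> z != y -> e x z = e y z.

Lemma automorphism_degree f : is_automorphism e f -> forall x, degree (f x) = degree x.
Proof.
move=> autf x; rewrite /degree -(card_image (@perm_inj _ f) (e x)).
apply: eq_card => z; apply/idP/imageP => [ez | [y exy ->]]; last by rewrite unfold_in autf.
by exists (f^-1%g z); rewrite ?permKV // unfold_in -autf permKV.
Qed.

Lemma distinguishing_degree t (c : V -> 'I_t) :
  (forall x y, c x = c y -> degree x = degree y -> x = y) -> distinguishing e c.
Proof.
move=> c_deg_inj f autf cf; apply/permP => x; rewrite perm1.
exact: c_deg_inj (cf x) (automorphism_degree autf x).
Qed.

Hypothesis e_simple : simple_graph e.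

Lemma twins_tperm_automorphism x y : twins x y -> is_automorphism e (tperm x y).
Proof.
have [e_sym e_irr] := e_simple.
move=> xy_twins a b.
case: tpermP => [->|->|/eqP ax /eqP ay]; case: tpermP => [->|->|/eqP bx /eqP by_];
  rewrite ?e_irr ?(e_sym a) ?(e_sym y x) ?(xy_twins b) ?(xy_twins a) //.
Qed.

Lemma twins_card_leq (A : {set V}) s :
  {in A &, forall x y, x != y -> twins x y} -> has_dist_labeling e s -> #|A| <= s.
Proof.
move=> A_twins [c c_dist].
rewrite -[s]card_ord; apply: (@leq_card_in _ _ c) => x y xA yA cxy.
apply/eqP; apply: contraT => xy.
have c_tperm z : c (tperm x y z) = c z by case: tpermP => [->|->|]; rewrite ?cxy.
have := c_dist _ (twins_tperm_automorphism (A_twins x y xA yA xy)) c_tperm.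
by move/permP/(_ x); rewrite tpermL perm1 => /eqP; rewrite eq_sym (negbTE xy).
Qed.

End Labelings.

Lemma card_sum_pred (T1 T2 : finType) (P : pred (T1 + T2)) :
  #|P| = #|[pred x | P (inl x)]| + #|[pred y | P (inr y)]|.
Proof. by rewrite -!sum1_card big_sumType. Qed.

Section Functigraph.
Variables (V : finType) (e : rel V) (g : V -> V).
Let F := functigraph e g.

Lemma functigraph_simple : simple_graph e -> simple_graph F.
Proof.
case=> e_sym e_irr; split; last by case=> x /=.
by case=> x [] y //=; rewrite e_sym.
Qed.

Lemma functigraph_degree_inl x : degree F (inl x) = (degree e x).+1.
Proof.
rewrite /degree card_sum_pred -addn1; congr (_ + _).
by rewrite -(card1 (g x)); apply: eq_card => y; rewrite !inE eq_sym.
Qed.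

Lemma functigraph_degree_inr y : degree F (inr y) = #|[pred x | g x == y]| + degree e y.
Proof. by rewrite /degree card_sum_pred. Qed.

Lemma functigraph_twins_inl x y :
  twins e x y -> g x = g y -> twins F (inl x) (inl y).
Proof.
move=> xy_twins gxy [] z; last by rewrite /= gxy.
by rewrite !(inj_eq (@inl_inj _ _)); apply: xy_twins.
Qed.

End Functigraph.

Definition complete n : rel 'I_n := fun x y => x != y.
Arguments complete : clear implicits.

Section Complete.
Variable n : nat.

Lemma complete_simple : simple_graph (complete n).
Proof. by split => [x y | x]; rewrite /complete ?eqxx // eq_sym. Qed.

Lemma complete_connected : 0 < n -> connected_graph (complete n).
Proof.
move=> n_gt0; split; first by rewrite card_ord.
by move=> x y; have [-> | xy] := eqVneq x y; [exact: connect0 | exact: connect1].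
Qed.

Lemma complete_degree x : degree (complete n) x = n.-1.
Proof.
by rewrite -[in RHS](card_ord n) -(cardC1 x); apply: eq_card => y; rewrite !inE eq_sym.
Qed.

Lemma complete_twins x y : twins (complete n) x y.
Proof. by move=> z zx zy; rewrite /complete eq_sym zx eq_sym zy. Qed.

Lemma Dist_complete : Dist_eq (complete n) n.
Proof.
split; first by exists id; apply: distinguishing_degree.
move=> s; rewrite -[X in X <= s]card_ord -cardsT.
by apply: (twins_card_leq complete_simple) => x y _ _ _; apply: complete_twins.
Qed.

End Complete.

Lemma Dist_functigraph_complete_const n :
  Dist_eq (functigraph (complete n.+2) (fun=> ord0)) n.+2.
Proof.
set F := functigraph _ _.
split.
  have deg_inl_inr x : degree F (inl x) != degree F (inr x).
    rewrite functigraph_degree_inl functigraph_degree_inr complete_degree.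
    have const_card b : #|[pred z : 'I_n.+2 | b]| = b * n.+2.
      by case: b; rewrite ?card0 // mul1n -[in RHS](card_ord n.+2); apply: eq_card.
    rewrite const_card; case: (ord0 == x); lia.
  exists (fun a => match a with inl i | inr i => i end).
  apply: distinguishing_degree; case=> x [] y /= -> // /eqP.
    by rewrite (negbTE (deg_inl_inr y)).
  by rewrite eq_sym (negbTE (deg_inl_inr y)).
move=> s; rewrite -[X in X <= s]card_ord -cardsT -(card_imset _ (@inl_inj _ 'I_n.+2)).
apply: (twins_card_leq (functigraph_simple _ (complete_simple _))).
move=> _ _ /imsetP[x _ ->] /imsetP[y _ ->] _.
by apply: functigraph_twins_inl => //; apply: complete_twins.
Qed.

Theorem lemma2p6 : forall t : nat, 2 <= t ->
  exists (V : finType) (e : rel V) (g : V -> V),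
    simple_graph e /\ connected_graph e /\
    Dist_eq e t /\ Dist_eq (functigraph e g) t.
Proof.
case=> [|[|n]] // _; exists 'I_n.+2, (complete n.+2), (fun=> ord0).
split; first exact: complete_simple.
split; first exact: complete_connected.
split; [exact: Dist_complete | exact: Dist_functigraph_complete_const].
Qed.
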